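(* Let $H=\mathbb{C}^n$, let $V\subset H$ be a real linear subspace, and let $\mathcal{F}=\{f_1,\ldots,f_m\}\subset H$ be a frame for $V$. The following statements are equivalent: (1) $\mathcal{F}$ is phase retrievable with respect to $V$; (2) $\ker\mathbb{A}\cap\big(\mathcal{S}^{1,0}(V)-\mathcal{S}^{1,0}(V)\big)=\{0\}$, where $\mathcal{S}^{1,0}(V)-\mathcal{S}^{1,0}(V)=\{xx^*-yy^*:\ x,y\in V\}$; (3) $\ker\mathbb{A}\cap\mathcal{S}^{1,1}(V)=\{0\}$; (4) $\ker\mathbb{A}\cap\big(\mathcal{S}^{2,0}(V)\cup\mathcal{S}^{1,1}(V)\cup\mathcal{S}^{0,2}(V)\big)=\{0\}$; (5) there do not exist vectors $u,v\in V$ with $[\![u,v]\!]\neq 0$ such that $\operatorname{Re}\big(\langle u,f_k\rangle\langle f_k,v\rangle\big)=0$ for all $1\le k\le m$.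
   Context: The inner product on $\mathbb{C}^n$ is $\langle x,y\rangle=\sum_j x_j\overline{y_j}$ (linear in the first argument), and $x^*$ denotes the conjugate transpose. $\mathcal{F}$ is a frame for $V$ if there is $A>0$ with $\sum_{k=1}^m|\langle x,f_k\rangle|^2\ge A\|x\|^2$ for all $x\in V$. Two vectors $x,y\in H$ are equivalent, $x\sim y$, if $x=cy$ for some $c\in\mathbb{C}$ with $|c|=1$. Define $\alpha(x)=(|\langle x,f_k\rangle|)_{k=1}^m\in\mathbb{R}^m$. $\mathcal{F}$ is phase retrievable with respect to $V$ if for all $x,y\in V$, $\alpha(x)=\alpha(y)$ implies $x\sim y$. $\operatorname{Sym}(\mathbb{C}^n)$ is the real vector space of self-adjoint $n\times n$ complex matrices with inner product $\langle T,S\rangle_{HS}=\operatorname{trace}(TS)$. For $u,v\in\mathbb{C}^n$, $[\![u,v]\!]=\frac12(uv^*+vu^* )\in\operatorname{Sym}(\mathbb{C}^n)$. The linear map $\mathbb{A}:\operatorname{Sym}(\mathbb{C}^n)\to\mathbb{R}^m$ is $(\mathbb{A}(T))_k=\langle Tf_k,f_k\rangle=\operatorname{trace}(T f_kf_k^* )$. As subsets of $\operatorname{Sym}(\mathbb{C}^n)$: $\mathcal{S}^{1,0}(V)=\{xx^*: x\in V\}$, $\mathcal{S}^{1,1}(V)=\{[\![u,v]\!]: u,v\in V\}$, $\mathcal{S}^{2,0}(V)=\{uu^*+vv^*: u,v\in V\}$, $\mathcal{S}^{0,2}(V)=\{-uu^*-vv^*: u,v\in V\}$. *)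

(* The complex field C^n is modelled by 'cV[C]_n for an
   arbitrary C : numClosedFieldType. *)
From HB Require Import structures.
From mathcomp Require Import all_boot all_order all_algebra.
Set Implicit Arguments. Unset Strict Implicit. Unset Printing Implicit Defensive.
Import Order.TTheory GRing.Theory Num.Theory.
Local Open Scope ring_scope.

Section Defs.
Variables (C : numClosedFieldType) (n m : nat).

Definition adj {p q : nat} (A : 'M[C]_(p, q)) : 'M[C]_(q, p) := (map_mx Num.conj A)^T.

Definition inner (x y : 'cV[C]_n) : C := \sum_(j < n) x j 0 * (y j 0)^*.

Definition real_subspace (V : pred 'cV[C]_n) : Prop :=
  [/\ 0 \in V,
      (forall x y, x \in V -> y \in V -> x + y \in V) &
      (forall (a : C) x, a \is Num.real -> x \in V -> a *: x \in V)].

Definition is_frame (V : pred 'cV[C]_n) (f : 'I_m -> 'cV[C]_n) : Prop :=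
  exists A : C, 0 < A /\
    forall x, x \in V -> A * inner x x <= \sum_(k < m) `|inner x (f k)| ^+ 2.

Definition equiv_vec (x y : 'cV[C]_n) : Prop := exists c : C, `|c| = 1 /\ x = c *: y.

Definition alpha (f : 'I_m -> 'cV[C]_n) (x : 'cV[C]_n) : 'rV[C]_m :=
  \row_k `|inner x (f k)|.

Definition phase_retrievable (V : pred 'cV[C]_n) (f : 'I_m -> 'cV[C]_n) : Prop :=
  forall x y, x \in V -> y \in V -> alpha f x = alpha f y -> equiv_vec x y.

Definition sympr (u v : 'cV[C]_n) : 'M[C]_n :=
  (2%:R)^-1 *: (u *m adj v + v *m adj u).

Definition Amap (f : 'I_m -> 'cV[C]_n) (T : 'M[C]_n) : 'rV[C]_m :=
  \row_k \tr (T *m (f k *m adj (f k))).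

Definition S10diff (V : pred 'cV[C]_n) (T : 'M[C]_n) : Prop :=
  exists x y, [/\ x \in V, y \in V & T = x *m adj x - y *m adj y].
Definition S11 (V : pred 'cV[C]_n) (T : 'M[C]_n) : Prop :=
  exists u v, [/\ u \in V, v \in V & T = sympr u v].
Definition S20 (V : pred 'cV[C]_n) (T : 'M[C]_n) : Prop :=
  exists u v, [/\ u \in V, v \in V & T = u *m adj u + v *m adj v].
Definition S02 (V : pred 'cV[C]_n) (T : 'M[C]_n) : Prop :=
  exists u v, [/\ u \in V, v \in V & T = - (u *m adj u) - v *m adj v].

Definition ker_meet_trivial (f : 'I_m -> 'cV[C]_n) (S : 'M[C]_n -> Prop) : Prop :=
  forall T, (Amap f T = 0 /\ S T) <-> T = 0.

End Defs.

(* The measurement map alpha determines x up to a unimodular scalar exactly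
   when it determines the rank-one matrix x x^*, and |<x, f_k>|^2 is the k-th
   entry of A(x x^* ).  So (1) says that A kills no nonzero x x^* - y y^* with
   x, y in V.  Since V is a real subspace, the polarisation identity
   x x^* - y y^* = [[x + y, x - y]] identifies these differences with S^{1,1}(V),
   and A([[u, v]])_k = Re(<u, f_k><f_k, v>) turns (3) into (5).  Finally A maps
   u u^* + v v^* to a sum of squares |<u, f_k>|^2 + |<v, f_k>|^2, which vanishes
   only when all these inner products do; the frame inequality then forces
   u = v = 0, so adding S^{2,0}(V) and S^{0,2}(V) to S^{1,1}(V) changes nothing. *)
From HB Require Import structures.
From mathcomp Require Import all_boot all_order all_algebra.
From mathcomp Require Import ring.
Import Order.TTheory GRing.Theory Num.Theory.
Local Open Scope ring_scope.

Set Implicit Arguments.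
Unset Strict Implicit.

Section PhaseRetrieval.
Variables (C : numClosedFieldType) (n m : nat).
Implicit Types (u v x y : 'cV[C]_n) (V : pred 'cV[C]_n) (T : 'M[C]_n).

Lemma outer_entry u v i j : (u *m adj v) i j = u i 0 * (v j 0)^*.
Proof. by rewrite !mxE big_ord1 !mxE. Qed.

Lemma conj_inner x y : (inner x y)^* = inner y x.
Proof.
rewrite /inner rmorph_sum; apply: eq_bigr => j _.
by rewrite rmorphM /= conjCK mulrC.
Qed.

Lemma half_real : (2%:R^-1 : C) \is Num.real.
Proof. by apply: ger0_real; rewrite invr_ge0 ler0n. Qed.

Lemma equiv_vecP x y : equiv_vec x y <-> x *m adj x = y *m adj y.
Proof.
split=> [[c [c1 ->]] | E].
  have cc : c * c^* = 1 by rewrite -normCK c1 expr1n.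
  apply/matrixP => i j; rewrite !outer_entry !mxE rmorphM /=.
  by rewrite mulrACA cc mul1r.
have Eij i j : x i 0 * (x j 0)^* = y i 0 * (y j 0)^* by rewrite -!outer_entry E.
have [j /= yj | y0] := pickP (fun j => y j 0 != 0); last first.
  exists 1; split; first exact: normr1.
  have {}y0 i : y i 0 = 0 by apply/eqP/negbFE/y0.
  apply/matrixP => i k; rewrite (ord1 k) scale1r y0.
  by apply/eqP; rewrite -mul_conjC_eq0 Eij y0 mul0r.
have xj : (x j 0)^* != 0.
  rewrite conjC_eq0; apply: contraNneq yj => x0.
  by rewrite -mul_conjC_eq0 -Eij x0 mul0r.
exists ((y j 0)^* / (x j 0)^*); split.
  have nxy : `|x j 0| = `|y j 0|.
    by apply/eqP; rewrite -(@eqrXn2 _ 2) ?normr_ge0 // !normCK Eij.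
  by rewrite normrM normfV !norm_conjC nxy divff // normr_eq0.
apply/matrixP => i k; rewrite (ord1 k) mxE.
by apply: (mulIf xj); rewrite Eij; field.
Qed.

Lemma frame_inner_eq0 V (f : 'I_m -> 'cV[C]_n) u :
  is_frame V f -> u \in V -> (forall k, inner u (f k) = 0) -> u = 0.
Proof.
case=> A [A_gt0 frameA] Vu uf0.
have uu_ge0 : 0 <= inner u u by apply: sumr_ge0 => j _; exact: mul_conjC_ge0.
have uu0 : inner u u = 0.
  apply/eqP; rewrite eq_le uu_ge0 andbT -(pmulr_rle0 _ A_gt0).
  by rewrite (le_trans (frameA u Vu)) // big1 // => k _; rewrite uf0 normr0 expr0n.
have uj0 := psumr_eq0P (fun j _ => mul_conjC_ge0 (u j 0)) uu0.
apply/matrixP => i j; rewrite (ord1 j) mxE.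
by apply/eqP; rewrite -mul_conjC_eq0; apply/eqP; exact: uj0.
Qed.

Lemma S10diff_S11 V T : real_subspace V -> S10diff V T <-> S11 V T.
Proof.
case=> _ VD VZ.
have VB x y : x \in V -> y \in V -> x - y \in V.
  move=> Vx Vy; rewrite -scaleN1r; apply: VD => //.
  by apply: VZ; rewrite ?realN ?real1.
split=> [[x [y [Vx Vy ->]]] | [u [v [Vu Vv ->]]]].
  exists (x + y), (x - y); split; [exact: VD | exact: VB |].
  apply/matrixP => i j; rewrite /sympr !(mxE, big_ord1) !(rmorphD, rmorphN) /=.
  by field.
exists (2%:R^-1 *: (u + v)), (2%:R^-1 *: (u - v)); split.
- by apply: VZ; [exact: half_real | exact: VD].
- by apply: VZ; [exact: half_real | exact: VB].
apply/matrixP => i j; rewrite /sympr !(mxE, big_ord1).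
rewrite !(rmorphD, rmorphN, rmorphM) /= (conj_Creal half_real).
by field.
Qed.

Lemma ker_meet_trivialP (f : 'I_m -> 'cV[C]_n) (S : 'M[C]_n -> Prop) : S 0 ->
  ker_meet_trivial f S <-> (forall T, S T -> Amap f T = 0 -> T = 0).
Proof.
move=> S0; split=> [trivS T ST AT | trivS T]; first exact/trivS.
split=> [[AT ST] | ->]; first exact: trivS.
by split=> //; apply/rowP => k; rewrite !mxE mul0mx mxtrace0.
Qed.

Variable f : 'I_m -> 'cV[C]_n.

Fact Amap_is_zmod_morphism : zmod_morphism (Amap f).
Proof. by move=> A B; apply/rowP => k; rewrite !mxE mulmxBl linearB. Qed.

HB.instance Definition _ :=
  GRing.isZmodMorphism.Build 'M[C]_n 'rV[C]_m (Amap f) Amap_is_zmod_morphism.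

Lemma Amap_outer u v :
  Amap f (u *m adj v) = \row_k (inner u (f k) * inner (f k) v).
Proof.
apply/rowP => k; rewrite !mxE /inner /mxtrace mulr_suml.
apply: eq_bigr => i _; rewrite mxE mulr_sumr; apply: eq_bigr => j _.
by rewrite !outer_entry; ring.
Qed.

Lemma Amap_outer_norm u : Amap f (u *m adj u) = \row_k `|inner u (f k)| ^+ 2.
Proof. by rewrite Amap_outer; apply/rowP => k; rewrite !mxE normCK conj_inner. Qed.

Lemma Amap_sympr u v :
  Amap f (sympr u v) = \row_k 'Re (inner u (f k) * inner (f k) v).
Proof.
have -> : Amap f (sympr u v) = 2%:R^-1 *: Amap f (u *m adj v + v *m adj u).
  by apply/rowP => k; rewrite !mxE /sympr -scalemxAl mxtraceZ.
apply/rowP => k; rewrite raddfD /= !Amap_outer !mxE ReE rmorphM /= !conj_inner.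
by field.
Qed.

Lemma Amap_outer_diff_eq0 x y :
  Amap f (x *m adj x - y *m adj y) = 0 <-> alpha f x = alpha f y.
Proof.
rewrite raddfB /= !Amap_outer_norm; split=> /rowP E; apply/rowP => k;
  move: (E k); rewrite !mxE.
  by move/eqP; rewrite subr_eq0 eqrXn2 ?normr_ge0 // => /eqP.
by move=> ->; rewrite subrr.
Qed.

Lemma Amap_outer_sum_eq0 V u v : is_frame V f -> u \in V -> v \in V ->
  Amap f (u *m adj u + v *m adj v) = 0 -> u = 0 /\ v = 0.
Proof.
rewrite raddfD /= !Amap_outer_norm => frameVf Vu Vv /rowP A0.
have uv0 k : inner u (f k) = 0 /\ inner v (f k) = 0.
  move: (A0 k); rewrite !mxE => /eqP.
  rewrite paddr_eq0 ?exprn_ge0 ?normr_ge0 // !expf_eq0 /= !normr_eq0.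
  by case/andP=> /eqP -> /eqP ->.
by split; apply: frame_inner_eq0 frameVf _ _ => // k; case: (uv0 k).
Qed.

Lemma Amap_sympr_eq0 u v :
  Amap f (sympr u v) = 0 <->
  (forall k, 'Re (inner u (f k) * inner (f k) v) = 0).
Proof.
rewrite Amap_sympr; split=> [/rowP E k | Re0]; last by apply/rowP => k; rewrite !mxE.
by move: (E k); rewrite !mxE.
Qed.

Lemma sympr0 : sympr 0 0 = 0 :> 'M[C]_n.
Proof. by rewrite /sympr !mul0mx addr0 scaler0. Qed.

Lemma phase_retrievable_kerS10diff V : 0 \in V ->
  phase_retrievable V f <-> ker_meet_trivial f (S10diff V).
Proof.
move=> V0; rewrite ker_meet_trivialP; last by exists 0, 0; rewrite subrr.
split=> [PR _ [x [y [Vx Vy ->]]] /Amap_outer_diff_eq0 axy | trivS x y Vx Vy axy].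
  by move/equiv_vecP: (PR x y Vx Vy axy) => ->; rewrite subrr.
apply/equiv_vecP/eqP; rewrite -subr_eq0; apply/eqP/trivS.
  by exists x, y.
exact/Amap_outer_diff_eq0.
Qed.

Lemma kerS10diff_kerS11 V : real_subspace V ->
  ker_meet_trivial f (S10diff V) <-> ker_meet_trivial f (S11 V).
Proof. by move=> HV; split=> trivS T; rewrite -trivS (S10diff_S11 T HV). Qed.

Lemma kerS11_kerS20_S11_S02 V : 0 \in V -> is_frame V f ->
  ker_meet_trivial f (S11 V) <->
  ker_meet_trivial f (fun T => S20 V T \/ S11 V T \/ S02 V T).
Proof.
move=> V0 frameVf.
have S11_0 : S11 V 0 by exists 0, 0; rewrite sympr0.
have U_0 : S20 V 0 \/ S11 V 0 \/ S02 V 0 by right; left.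
rewrite !ker_meet_trivialP //.
split=> trivS T; last by move=> ST; apply: trivS; right; left.
case=> [[u [v [Vu Vv ->]]] | [/trivS // | [u [v [Vu Vv ->]]]]] AT.
  by have [-> ->] := Amap_outer_sum_eq0 frameVf Vu Vv AT; rewrite mul0mx addr0.
have {}AT : Amap f (u *m adj u + v *m adj v) = 0.
  by move: AT; rewrite -opprD raddfN /= => /eqP; rewrite oppr_eq0 => /eqP.
by have [-> ->] := Amap_outer_sum_eq0 frameVf Vu Vv AT; rewrite mul0mx oppr0 addr0.
Qed.

Lemma kerS11_no_real_null_pair V : 0 \in V ->
  ker_meet_trivial f (S11 V) <->
  ~ (exists u v, [/\ u \in V, v \in V, sympr u v != 0 &
       forall k, 'Re (inner u (f k) * inner (f k) v) = 0]).
Proof.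
move=> V0; rewrite ker_meet_trivialP; last by exists 0, 0; rewrite sympr0.
split=> [trivS [u [v [Vu Vv /eqP nz /Amap_sympr_eq0 Auv]]] | noPair T].
  by apply/nz/trivS => //; exists u, v.
case=> u [v [Vu Vv ->]] /Amap_sympr_eq0 Auv.
by have [// | nz] := eqVneq (sympr u v) 0; case: noPair; exists u, v.
Qed.

End PhaseRetrieval.

Unset Implicit Arguments.

Theorem theorem3p1 (C : numClosedFieldType) (n m : nat)
    (V : pred 'cV[C]_n) (f : 'I_m -> 'cV[C]_n) :
  real_subspace V -> is_frame V f ->
  [<-> phase_retrievable V f;
       ker_meet_trivial f (S10diff V);
       ker_meet_trivial f (S11 V);
       ker_meet_trivial f (fun T => S20 V T \/ S11 V T \/ S02 V T);
       ~ (exists u v, [/\ u \in V, v \in V, sympr u v != 0 &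
            forall k : 'I_m, 'Re (inner u (f k) * inner (f k) v) = 0])].
Proof.
move=> HV frameVf; have [V0 _ _] := HV.
have e12 := phase_retrievable_kerS10diff f V0.
have e23 := kerS10diff_kerS11 f HV.
have e34 := kerS11_kerS20_S11_S02 V0 frameVf.
have e35 := kerS11_no_real_null_pair f V0.
tfae=> H.
- exact/e12.
- exact/e23.
- exact/e34.
- exact/e35/e34.
- exact/e12/e23/e35.
Qed.
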